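(* Let $f(x)=\frac1n\sum_{i=1}^n f_i(x)$ with $f_i:\mathbb{R}^d\to\mathbb{R}$, where each $f_i$ is $L$-smooth and $f^*=\inf_x f(x)>-\infty$. Run No Full Grad SARAH (described in the context) with stepsize $\gamma\le\frac1{20L(n+1)}$. Then, to reach $\varepsilon$-accuracy, where $\varepsilon^2=\frac1S\sum_{s=1}^S\|\nabla f(x_s^0)\|^2$, the method needs $\mathcal{O}\left(\frac{nL}{\varepsilon^2}\right)$ iterations and oracle calls.
   Context: No Full Grad SARAH: input $x_0^0\in\mathbb{R}^d$, $v_0=0$, stepsize $\gamma>0$. For epochs $s=0,1,\dots,S$: choose a permutation $\pi_s^1,\dots,\pi_s^n$ of $\{1,\dots,n\}$ (by any shuffling rule); set $\tilde v_s^1=0$, $v_s^0=v_s$, $x_s^1=x_s^0-\gamma v_s^0$; for $t=1,\dots,n$ set $\tilde v_s^{t+1}=\frac{t-1}{t}\tilde v_s^t+\frac1t\nabla f_{\pi_s^t}(x_s^t)$, $v_s^t=\frac1n\big(\nabla f_{\pi_s^t}(x_s^t)-\nabla f_{\pi_s^t}(x_s^{t-1})\big)+v_s^{t-1}$, $x_s^{t+1}=x_s^t-\gamma v_s^t$; then set $x_{s+1}^0=x_s^{n+1}$ and $v_{s+1}=\tilde v_s^{n+1}$. An oracle call is one evaluation of a single component gradient $\nabla f_i$; an iteration is one inner step. The $\mathcal{O}(\cdot)$ hides absolute constants and the dependence on the initial gap. *)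

From HB Require Import structures.
From mathcomp Require Import all_boot all_order all_algebra all_fingroup.
From mathcomp Require Import all_classical all_reals all_analysis.
Set Implicit Arguments. Unset Strict Implicit. Unset Printing Implicit Defensive.
Import Order.TTheory GRing.Theory Num.Theory.
Import numFieldNormedType.Exports.
Local Open Scope ring_scope.

Section Defs.
Variables (R : realType) (d : nat).
Notation vec := 'rV[R]_d.

Definition dotv (u v : vec) : R := \sum_(j < d) u 0 j * v 0 j.
Definition enorm (u : vec) : R := Num.sqrt (dotv u u).

Definition is_gradient (f : vec -> R) (g : vec -> vec) : Prop :=
  forall x, differentiable f x /\ forall h, ('d f x) h = dotv (g x) h.

Definition L_smooth (L : R) (f : vec -> R) (g : vec -> vec) : Prop :=
  is_gradient f g /\ forall x y, enorm (g x - g y) <= L * enorm (x - y).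

Variables (n : nat) (g : 'I_n -> vec -> vec) (gamma : R).

(* Inner state before step t: (x_s^{t-1}, x_s^t, v_s^{t-1}, tilde v_s^t). *)
Definition nfg_inner_step (i : 'I_n) (t : nat) (st : vec * vec * vec * vec)
  : vec * vec * vec * vec :=
  let: (xp, xc, vc, vt) := st in
  let g1 := g i xc in
  let g0 := g i xp in
  let vt' := ((t%:R - 1) / t%:R) *: vt + (t%:R)^-1 *: g1 in
  let v' := (n%:R)^-1 *: (g1 - g0) + vc in
  (xc, xc - gamma *: v', v', vt').

(* One epoch with permutation p (pi_s^t = p (t-1), components indexed by 'I_n):
   input (x_s^0, v_s), output (x_{s+1}^0, v_{s+1}) = (x_s^{n+1}, tilde v_s^{n+1}). *)
Definition nfg_epoch (p : {perm 'I_n}) (st : vec * vec) : vec * vec :=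
  let: (x0, v) := st in
  let: (_, xc, _, vt) :=
    foldl (fun acc (i : 'I_n) => nfg_inner_step (p i) (val i).+1 acc)
          (x0, x0 - gamma *: v, v, 0) (enum 'I_n) in
  (xc, vt).

(* run pi x00 s = (x_s^0, v_s), with v_0 = 0. *)
Fixpoint nfg_run (pi : nat -> {perm 'I_n}) (x00 : vec) (s : nat) : vec * vec :=
  match s with
  | 0 => (x00, 0)
  | s'.+1 => nfg_epoch (pi s') (nfg_run pi x00 s')
  end.
End Defs.

Definition favg (R : realType) (d n : nat) (f : 'I_n -> 'rV[R]_d -> R)
  (x : 'rV[R]_d) : R := (n%:R)^-1 * \sum_(i < n) f i x.
Definition gavg (R : realType) (d n : nat) (g : 'I_n -> 'rV[R]_d -> 'rV[R]_d)
  (x : 'rV[R]_d) : 'rV[R]_d := (n%:R)^-1 *: \sum_(i < n) g i x.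

(* Within an epoch started at (x, v) each inner step moves the iterate by gamma times a
   direction that stays within 2 L gamma |v| of v, so the epoch is a perturbed gradient step
   x' ~ x - (n+1) gamma v, and the new direction v' (the running average of the component
   gradients met during the epoch, each at a point within 2 (n+1) gamma |v| of x) is within
   4 L (n+1) gamma |v| of grad f(x').  With G = (n+1) gamma, the descent lemma then makes
   Phi_s = f(x_{s+1}^0) + G |v_s|^2 / 25 drop by at least G/2 |grad f(x_{s+1}^0)|^2 per epoch.
   As v_0 = 0 the first epoch does not move, so Phi_0 = f(x_0^0), and telescoping gives
   G/2 sum_{s=1}^S |grad f(x_s^0)|^2 <= f(x_0^0) - f^*, i.e. the claim with C = 2. *)

From HB Require Import structures.
From mathcomp Require Import all_boot all_order all_algebra all_fingroup.
From mathcomp Require Import all_classical all_reals all_analysis.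
From mathcomp Require Import ring lra.
Import Order.TTheory GRing.Theory Num.Theory.
Import numFieldNormedType.Exports.
Local Open Scope ring_scope.
Set Implicit Arguments. Unset Strict Implicit. Unset Printing Implicit Defensive.

Section Euclid.
Variables (R : realType) (d : nat).
Implicit Types (a : R) (u v w : 'rV[R]_d).

Lemma dotvC u v : dotv u v = dotv v u.
Proof. by apply: eq_bigr => j _; rewrite mulrC. Qed.

Lemma dotvDl u w v : dotv (u + w) v = dotv u v + dotv w v.
Proof. by rewrite /dotv -big_split; apply: eq_bigr => j _; rewrite !mxE mulrDl. Qed.

Lemma dotvZl a u v : dotv (a *: u) v = a * dotv u v.
Proof. by rewrite /dotv mulr_sumr; apply: eq_bigr => j _; rewrite !mxE mulrA. Qed.

Lemma dotvNl u v : dotv (- u) v = - dotv u v.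
Proof. by rewrite -scaleN1r dotvZl mulN1r. Qed.

Lemma dotvBl u w v : dotv (u - w) v = dotv u v - dotv w v.
Proof. by rewrite dotvDl dotvNl. Qed.

Lemma dotvDr u w v : dotv v (u + w) = dotv v u + dotv v w.
Proof. by rewrite dotvC dotvDl !(dotvC v). Qed.

Lemma dotvZr a u v : dotv v (a *: u) = a * dotv v u.
Proof. by rewrite dotvC dotvZl dotvC. Qed.

Lemma dotvBr u w v : dotv v (u - w) = dotv v u - dotv v w.
Proof. by rewrite dotvC dotvBl !(dotvC v). Qed.

Lemma dotv0l v : dotv 0 v = 0.
Proof. by rewrite -(scale0r 0) dotvZl mul0r. Qed.

Lemma dotv_suml I (r : seq I) (P : pred I) (F : I -> 'rV[R]_d) v :
  dotv (\sum_(i <- r | P i) F i) v = \sum_(i <- r | P i) dotv (F i) v.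
Proof. by elim/big_rec2: _ => [|i y1 y2 _ <-]; rewrite ?dotv0l ?dotvDl. Qed.

Lemma dotvv_ge0 v : 0 <= dotv v v.
Proof. by apply: sumr_ge0 => j _; rewrite -expr2 sqr_ge0. Qed.

Lemma dotvv_eq0 v : dotv v v = 0 -> v = 0.
Proof.
move=> /eqP; rewrite psumr_eq0 => [/allP v0|j _]; last by rewrite -expr2 sqr_ge0.
apply/rowP => j; have /implyP := v0 j (mem_index_enum j).
by rewrite mxE -expr2 sqrf_eq0 => /(_ isT)/eqP.
Qed.

Lemma enorm_ge0 v : 0 <= enorm v.
Proof. exact: sqrtr_ge0. Qed.

Lemma sqr_enorm v : enorm v ^+ 2 = dotv v v.
Proof. by rewrite sqr_sqrtr // dotvv_ge0. Qed.

Lemma enorm0 : enorm (0 : 'rV[R]_d) = 0.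
Proof. by rewrite /enorm dotv0l sqrtr0. Qed.

Lemma enorm_eq0 v : enorm v = 0 -> v = 0.
Proof. by move=> v0; apply: dotvv_eq0; rewrite -sqr_enorm v0 expr0n. Qed.

Lemma dotv_le_enormM u v : dotv u v <= enorm u * enorm v.
Proof.
have [/enorm_eq0 ->|u_neq0] := eqVneq (enorm u) 0; first by rewrite dotv0l enorm0 mul0r.
have [/enorm_eq0 ->|v_neq0] := eqVneq (enorm v) 0.
  by rewrite dotvC dotv0l enorm0 mulr0.
have u_gt0 : 0 < enorm u by rewrite lt_def u_neq0 enorm_ge0.
have v_gt0 : 0 < enorm v by rewrite lt_def v_neq0 enorm_ge0.
have := dotvv_ge0 (enorm v *: u - enorm u *: v).
rewrite !(dotvBl, dotvBr, dotvZl, dotvZr) -!sqr_enorm (dotvC v u) => sq_ge0.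
have : 0 <= 2 * (enorm u * enorm v) * (enorm u * enorm v - dotv u v) by nra.
by rewrite pmulr_rge0 ?subr_ge0 // !mulr_gt0.
Qed.

Lemma ler_enormD u v : enorm (u + v) <= enorm u + enorm v.
Proof.
rewrite -(ler_pXn2r (_ : (0 < 2)%N)) ?nnegrE ?addr_ge0 ?enorm_ge0 //.
rewrite sqr_enorm dotvDl !dotvDr -!sqr_enorm (dotvC v u).
have := dotv_le_enormM u v; have := enorm_ge0 u; have := enorm_ge0 v; nra.
Qed.

Lemma enormZ a v : enorm (a *: v) = `|a| * enorm v.
Proof. by rewrite /enorm dotvZl dotvZr mulrA -expr2 sqrtrM ?sqr_ge0 // sqrtr_sqr. Qed.

Lemma enormN v : enorm (- v) = enorm v.
Proof. by rewrite -scaleN1r enormZ normrN normr1 mul1r. Qed.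

Lemma ler_enormB u v : enorm (u - v) <= enorm u + enorm v.
Proof. by rewrite -(enormN v) ler_enormD. Qed.

Lemma enorm_distC u v : enorm (u - v) = enorm (v - u).
Proof. by rewrite -enormN opprB. Qed.

Lemma ler_enorm_sum I (r : seq I) (P : pred I) (F : I -> 'rV[R]_d) :
  enorm (\sum_(i <- r | P i) F i) <= \sum_(i <- r | P i) enorm (F i).
Proof.
elim/big_rec2: _ => [|i y1 y2 _ IH]; first by rewrite enorm0.
by rewrite (le_trans (ler_enormD _ _)) // lerD2l.
Qed.

Lemma is_derive_line (f : 'rV[R]_d -> R) x h t :
  differentiable f (t *: h + x) ->
  is_derive t 1 (fun s : R => f (s *: h + x)) ('d f (t *: h + x) h).
Proof.
move=> df.
have shift : (fun e : R => e^-1 *: (f ((e *: 1 + t) *: h + x) - f (t *: h + x))) =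
             (fun e : R => e^-1 *: (f (e *: h + (t *: h + x)) - f (t *: h + x))).
  by apply/funext => e; rewrite -[e *: 1]/(e * 1) mulr1 scalerDl addrA.
apply: DeriveDef; first by rewrite /derivable shift; exact: diff_derivable.
by rewrite /derive shift; exact: deriveE.
Qed.

Lemma L_smooth_descent (L : R) (f : 'rV[R]_d -> R) (g : 'rV[R]_d -> 'rV[R]_d) x y :
  0 <= L -> L_smooth L f g ->
  f y <= f x + dotv (g x) (y - x) + L * enorm (y - x) ^+ 2.
Proof.
move=> L_ge0 [grad lip]; set h := y - x.
pose phi (s : R) := f (s *: h + x).
have phi' (t : R) : is_derive t 1 phi (dotv (g (t *: h + x)) h).
  by have [df <-] := grad (t *: h + x); exact: is_derive_line.
have [c /andP[c_gt0 c_lt1] E] : exists2 c, c \in `]0, 1[ & phi 1 - phi 0 = dotv (g (c *: h + x)) h.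
  have [c c01 ->] := MVT ltr01 (fun t _ => phi' t)
    (derivable_within_continuous (fun t _ => @ex_derive _ _ _ _ _ _ _ (phi' t))).
  by exists c; rewrite // subr0 mulr1.
have -> : f y = phi 1 by rewrite /phi scale1r /h addrNK.
have -> : f x = phi 0 by rewrite /phi scale0r add0r.
rewrite -(subrK (phi 0) (phi 1)) E addrC -!addrA lerD2l -lerBlDl -dotvBl.
apply: le_trans (dotv_le_enormM _ _) _.
have := lip (c *: h + x) x; rewrite addrK enormZ gtr0_norm // => lip_c.
rewrite (le_trans (ler_wpM2r (enorm_ge0 _) lip_c)) // expr2 mulrA ler_wpM2r ?enorm_ge0 //.
by rewrite mulrCA ler_piMl ?mulr_ge0 ?enorm_ge0 // ltW.
Qed.
End Euclid.

Section Average.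
Variables (R : realType) (d n : nat) (L : R).
Variables (f : 'I_n -> 'rV[R]_d -> R) (g : 'I_n -> 'rV[R]_d -> 'rV[R]_d).
Hypotheses (n_gt0 : (0 < n)%N) (L_ge0 : 0 <= L).

Let n_neq0 : n%:R != 0 :> R. Proof. by rewrite pnatr_eq0 -lt0n. Qed.

Lemma favg_descent x y : (forall i, L_smooth L (f i) (g i)) ->
  favg f y <= favg f x + dotv (gavg g x) (y - x) + L * enorm (y - x) ^+ 2.
Proof.
move=> smooth; rewrite /favg /gavg dotvZl dotv_suml.
have : \sum_i f i y <= \sum_i (f i x + dotv (g i x) (y - x) + L * enorm (y - x) ^+ 2).
  by apply: ler_sum => i _; exact: L_smooth_descent.
rewrite !big_split /= sumr_const card_ord => le_sum.
rewrite (le_trans (ler_wpM2l _ le_sum)) ?invr_ge0 ?ler0n //.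
by rewrite !mulrDr -[L * _ *+ n]mulr_natl mulKf.
Qed.

Lemma gavg_lipschitz x y : (forall i x y, enorm (g i x - g i y) <= L * enorm (x - y)) ->
  enorm (gavg g x - gavg g y) <= L * enorm (x - y).
Proof.
move=> lip; rewrite /gavg -scalerBr -sumrB enormZ ger0_norm ?invr_ge0 ?ler0n //.
rewrite ler_pdivrMl ?ltr0n // (le_trans (ler_enorm_sum _ _ _)) //.
rewrite (le_trans (ler_sum _ (fun i _ => lip i x y))) //.
by rewrite sumr_const card_ord mulr_natl.
Qed.
End Average.

Lemma take_enum_ordS n k (lt_kn : (k < n)%N) :
  take k.+1 (enum 'I_n) = rcons (take k (enum 'I_n)) (Ordinal lt_kn).
Proof.
rewrite (take_nth (Ordinal lt_kn)) ?size_enum_ord //.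
by rewrite (nth_ord_enum _ (Ordinal lt_kn)).
Qed.

Section Epoch.
Variables (R : realType) (d n : nat) (g : 'I_n -> 'rV[R]_d -> 'rV[R]_d) (gamma L : R).
Hypotheses (n_gt0 : (0 < n)%N) (L_ge0 : 0 <= L) (gamma_ge0 : 0 <= gamma).
Hypothesis Lgamma_le : 2 * (L * gamma) <= 1.
Hypothesis g_lip : forall i x y, enorm (g i x - g i y) <= L * enorm (x - y).
Variables (p : {perm 'I_n}) (x0 v : 'rV[R]_d).

Local Notation vec := 'rV[R]_d.
Local Notation drift := (2 * (L * gamma) * enorm v).
Local Notation inner_step := (fun st (i : 'I_n) => nfg_inner_step g gamma (p i) (val i).+1 st).

Let Lgamma_ge0 : 0 <= L * gamma. Proof. exact: mulr_ge0. Qed.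
Let drift_ge0 : 0 <= drift. Proof. by rewrite !mulr_ge0 ?enorm_ge0. Qed.
Let drift_le : drift <= enorm v. Proof. by rewrite ler_piMl ?enorm_ge0. Qed.
Let n_gt0R : 0 < n%:R :> R. Proof. by rewrite ltr0n. Qed.

Definition epoch_inv k (st : vec * vec * vec * vec) : Prop :=
  let: (xp, xc, vc, vt) := st in
  [/\ xc = xp - gamma *: vc,
      enorm (vc - v) <= k%:R * (drift / n%:R),
      enorm (xc - (x0 - (k.+1%:R * gamma) *: v)) <= k.+1%:R * gamma * drift &
      enorm (k%:R *: vt - \sum_(i <- take k (enum 'I_n)) g (p i) x0)
        <= k%:R * (2 * L * (n%:R + 1) * gamma * enorm v)].

Lemma epoch_inv0 : epoch_inv 0 (x0, x0 - gamma *: v, v, 0).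
Proof.
split=> //; first by rewrite subrr enorm0 mul0r.
  by rewrite mul1r subrr enorm0 mulr_ge0.
by rewrite scale0r take0 big_nil subrr enorm0 mul0r.
Qed.

Lemma epoch_inv_dist k xp xc vc vt : (k <= n)%N -> epoch_inv k (xp, xc, vc, vt) ->
  enorm (xc - x0) <= 2 * (n%:R + 1) * gamma * enorm v.
Proof.
move=> le_kn [_ _ Ex _]; set c := k.+1%:R * gamma in Ex.
have -> : xc - x0 = (xc - (x0 - c *: v)) - c *: v by rewrite opprB addrA addrAC addrK.
have c_ge0 : 0 <= c by rewrite mulr_ge0.
have c_le : c <= (n%:R + 1) * gamma by rewrite ler_wpM2r // natr1 ler_nat.
rewrite (le_trans (ler_enormB _ _)) // enormZ ger0_norm //.
have := ler_wpM2l c_ge0 drift_le; have := ler_wpM2r (enorm_ge0 v) c_le; lra.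
Qed.

Lemma inner_v_drift k i xp vc : (k < n)%N ->
  enorm (vc - v) <= k%:R * (drift / n%:R) ->
  enorm ((n%:R)^-1 *: (g i (xp - gamma *: vc) - g i xp) + vc - v)
    <= k.+1%:R * (drift / n%:R).
Proof.
move=> lt_kn Ev.
have vc_le : enorm vc <= enorm v + drift.
  rewrite -[vc](subrK v) addrC (le_trans (ler_enormD _ _)) // lerD2l (le_trans Ev) //.
  by rewrite mulrA ler_pdivrMr // mulrC ler_wpM2l // ler_nat ltnW.
have jump : enorm ((n%:R)^-1 *: (g i (xp - gamma *: vc) - g i xp)) <= drift / n%:R.
  rewrite enormZ ger0_norm ?invr_ge0 ?ler0n // mulrC ler_wpM2r ?invr_ge0 ?ler0n //.
  rewrite (le_trans (g_lip _ _ _)) // addrC addKr enormN enormZ ger0_norm //.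
  rewrite [L * (_ * _)]mulrA (le_trans (ler_wpM2l Lgamma_ge0 vc_le)) //.
  have : 0 <= 1 - 2 * (L * gamma) by rewrite subr_ge0.
  by move/(mulr_ge0 (mulr_ge0 Lgamma_ge0 (enorm_ge0 v))); nra.
rewrite -addrA -natr1 mulrDl mul1r addrC (le_trans (ler_enormD _ _)) //.
exact: lerD.
Qed.

Lemma inner_x_drift k xc v' :
  enorm (xc - (x0 - (k.+1%:R * gamma) *: v)) <= k.+1%:R * gamma * drift ->
  enorm (v' - v) <= drift ->
  enorm (xc - gamma *: v' - (x0 - (k.+2%:R * gamma) *: v)) <= k.+2%:R * gamma * drift.
Proof.
move=> Ex Ev'.
have -> : xc - gamma *: v' - (x0 - (k.+2%:R * gamma) *: v) =
    (xc - (x0 - (k.+1%:R * gamma) *: v)) - gamma *: (v' - v).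
  by rewrite -(natr1 k.+1); apply/rowP => j; rewrite !mxE; ring.
rewrite (le_trans (ler_enormB _ _)) // enormZ ger0_norm // -(natr1 k.+1).
by have := ler_wpM2l gamma_ge0 Ev'; lra.
Qed.

Lemma inner_vt_drift k i xc vt (s : vec) :
  enorm (k%:R *: vt - s) <= k%:R * (2 * L * (n%:R + 1) * gamma * enorm v) ->
  enorm (xc - x0) <= 2 * (n%:R + 1) * gamma * enorm v ->
  enorm (k.+1%:R *: (((k.+1%:R - 1) / k.+1%:R) *: vt + (k.+1%:R)^-1 *: g i xc)
         - (s + g i x0)) <= k.+1%:R * (2 * L * (n%:R + 1) * gamma * enorm v).
Proof.
move=> Evt Ex.
have k1_neq0 : k.+1%:R != 0 :> R by rewrite pnatr_eq0.
have -> : k.+1%:R *: (((k.+1%:R - 1) / k.+1%:R) *: vt + (k.+1%:R)^-1 *: g i xc)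
    - (s + g i x0) = (k%:R *: vt - s) + (g i xc - g i x0).
  rewrite scalerDr !scalerA mulfV // scale1r mulrC divfK // -natr1 addrK.
  by rewrite opprD addrACA.
rewrite (le_trans (ler_enormD _ _)) // -natr1 mulrDl mul1r lerD //.
rewrite (le_trans (g_lip _ _ _)) // (le_trans (ler_wpM2l L_ge0 Ex)) //; lra.
Qed.

Lemma epoch_inv_step k (lt_kn : (k < n)%N) st : epoch_inv k st ->
  epoch_inv k.+1 (nfg_inner_step g gamma (p (Ordinal lt_kn)) k.+1 st).
Proof.
case: st => [[[xp xc] vc] vt] inv; have Exc := epoch_inv_dist (ltnW lt_kn) inv.
case: inv => Ex Ev Ex0 Evt /=; rewrite Ex in Exc Ex0 *.
have Ev' := inner_v_drift (p (Ordinal lt_kn)) xp lt_kn Ev.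
split=> //.
  apply: inner_x_drift => //; apply: le_trans Ev' _.
  by rewrite mulrA ler_pdivrMr // mulrC ler_wpM2l // ler_nat.
by rewrite take_enum_ordS big_rcons; apply: inner_vt_drift.
Qed.

Lemma epoch_inv_prefix k : (k <= n)%N ->
  epoch_inv k (foldl inner_step (x0, x0 - gamma *: v, v, 0) (take k (enum 'I_n))).
Proof.
elim: k => [_|k IH lt_kn]; first by rewrite take0; exact: epoch_inv0.
by rewrite take_enum_ordS foldl_rcons; apply: epoch_inv_step; apply: IH; apply: ltnW.
Qed.

Lemma epoch_inv_end : exists xp vc,
  epoch_inv n (xp, (nfg_epoch g gamma p (x0, v)).1, vc, (nfg_epoch g gamma p (x0, v)).2).
Proof.
have := epoch_inv_prefix (leqnn n); rewrite take_oversize ?size_enum_ord // /nfg_epoch.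
by case: foldl => [[[xp xc] vc] vt] inv; exists xp, vc.
Qed.

Lemma epoch_x_bound :
  enorm ((nfg_epoch g gamma p (x0, v)).1 - (x0 - (gamma * (n%:R + 1)) *: v))
    <= gamma * (n%:R + 1) * (2 * (L * gamma) * enorm v).
Proof. by have [xp [vc [_ _ Ex _]]] := epoch_inv_end; rewrite mulrC natr1. Qed.

Lemma epoch_v_bound :
  enorm ((nfg_epoch g gamma p (x0, v)).2 - gavg g (nfg_epoch g gamma p (x0, v)).1)
    <= 4 * (L * (gamma * (n%:R + 1))) * enorm v.
Proof.
have [xp [vc inv]] := epoch_inv_end; have Exc := epoch_inv_dist (leqnn n) inv.
case: inv => _ _ _; set x' := (nfg_epoch _ _ _ _).1; set v' := (nfg_epoch _ _ _ _).2.
rewrite take_oversize ?size_enum_ord //.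
have -> : \sum_(i <- enum 'I_n) g (p i) x0 = \sum_i g i x0.
  by rewrite big_enum /= [RHS](reindex_inj (@perm_inj _ p)); apply: eq_bigl => i; rewrite inE.
move=> Evt.
have Ev'0 : enorm (v' - gavg g x0) <= 2 * L * (n%:R + 1) * gamma * enorm v.
  have -> : v' - gavg g x0 = (n%:R)^-1 *: (n%:R *: v' - \sum_i g i x0).
    by rewrite /gavg scalerBr scalerA mulVf ?gt_eqF // scale1r.
  by rewrite enormZ ger0_norm ?invr_ge0 ?ler0n // ler_pdivrMl.
have E0x' := gavg_lipschitz n_gt0 x0 x' g_lip; rewrite [enorm (x0 - _)]enorm_distC in E0x'.
rewrite -[v'](subrK (gavg g x0)) -addrA (le_trans (ler_enormD _ _)) //.
by have := ler_wpM2l L_ge0 Exc; lra.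
Qed.
End Epoch.

Lemma lyapunov_real (R : realFieldType) (q rho a a' W D : R) :
  0 <= q -> q <= 1/40 -> 0 <= rho -> rho <= 1/20 -> 0 <= a -> 0 <= a' ->
  (1 - 2 * q) * a <= W -> 0 <= D -> D <= 2 * q * a + 4 * rho * a' ->
  D ^+ 2 / 2 + a ^+ 2 / 25 <= (1/2 - rho) * W ^+ 2 + a' ^+ 2 / 25.
Proof.
move=> q_ge0 q_le rho_ge0 rho_le a_ge0 a'_ge0 W_ge D_ge0 D_le.
have W2 : (19/20 * a) ^+ 2 <= W ^+ 2.
  by rewrite ler_pXn2r ?nnegrE ?mulr_ge0 //; nra.
have qa : (2 * q * a) ^+ 2 <= (a / 20) ^+ 2.
  by rewrite ler_pXn2r ?nnegrE ?mulr_ge0 //; nra.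
have rhoa' : (4 * rho * a') ^+ 2 <= (a' / 5) ^+ 2.
  by rewrite ler_pXn2r ?nnegrE ?mulr_ge0 //; nra.
have D2 : D ^+ 2 <= (2 * q * a + 4 * rho * a') ^+ 2.
  by rewrite ler_pXn2r ?nnegrE ?addr_ge0 ?mulr_ge0.
have := sqr_ge0 (2 * q * a - 4 * rho * a'); have := mulr_ge0 rho_ge0 (sqr_ge0 W).
rewrite !expr2 in W2 qa rhoa' D2 *; nra.
Qed.

Lemma favg_lyapunov_step (R : realType) d n (L G q a' : R)
    (f : 'I_n -> 'rV[R]_d -> R) (g : 'I_n -> 'rV[R]_d -> 'rV[R]_d) x x' v :
  (0 < n)%N -> 0 <= L -> (forall i, L_smooth L (f i) (g i)) ->
  0 < G -> 0 <= q -> q <= 1/40 -> L * G <= 1/20 -> 0 <= a' ->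
  enorm (x' - (x - G *: v)) <= G * (2 * q * enorm v) ->
  enorm (v - gavg g x) <= 4 * (L * G) * a' ->
  favg f x' + G * enorm v ^+ 2 / 25
    <= favg f x + G * a' ^+ 2 / 25 - G / 2 * enorm (gavg g x) ^+ 2.
Proof.
move=> n_gt0 L_ge0 smooth G_gt0 q_ge0 q_le LG_le a'_ge0 Ex' Ev.
have G_neq0 : G != 0 by rewrite gt_eqF.
have G_ge0 := ltW G_gt0.
set w := G^-1 *: (x - x'); set gx := gavg g x.
have x'_x : x' - x = - G *: w by rewrite /w scalerA mulNr mulfV // scaleN1r opprB.
have descent := favg_descent n_gt0 L_ge0 x x' smooth.
rewrite x'_x dotvZr enormZ normrN gtr0_norm // -/gx in descent.
have polar : enorm (w - gx) ^+ 2 = enorm w ^+ 2 - 2 * dotv gx w + enorm gx ^+ 2.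
  by rewrite !sqr_enorm dotvBl !dotvBr (dotvC w gx); ring.
have Ewv : enorm (w - v) <= 2 * q * enorm v.
  have -> : w - v = G^-1 *: - (x' - (x - G *: v)).
    by rewrite /w; apply/rowP => j; rewrite !mxE; field.
  by rewrite enormZ enormN ger0_norm ?invr_ge0 // ler_pdivrMl.
have Ewg : enorm (w - gx) <= 2 * q * enorm v + 4 * (L * G) * a'.
  by rewrite -[w](subrK v) -addrA (le_trans (ler_enormD _ _)) ?lerD.
have Ew : (1 - 2 * q) * enorm v <= enorm w.
  have := ler_enormD (v - w) w; rewrite subrK enorm_distC; lra.
have := lyapunov_real q_ge0 q_le (mulr_ge0 L_ge0 G_ge0) LG_le (enorm_ge0 v)
  a'_ge0 Ew (enorm_ge0 _) Ewg.
move/(ler_wpM2l G_ge0); rewrite polar; lra.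
Qed.

Section Run.
Variables (R : realType) (d n : nat) (L gamma : R).
Variables (f : 'I_n -> 'rV[R]_d -> R) (g : 'I_n -> 'rV[R]_d -> 'rV[R]_d).
Variables (pi : nat -> {perm 'I_n}) (x00 : 'rV[R]_d).
Hypotheses (n_gt0 : (0 < n)%N) (L_gt0 : 0 < L) (smooth : forall i, L_smooth L (f i) (g i)).
Hypotheses (gamma_gt0 : 0 < gamma) (gamma_le : gamma <= (20 * L * (n%:R + 1))^-1).

Local Notation X s := (nfg_run g gamma pi x00 s).1.
Local Notation V s := (nfg_run g gamma pi x00 s).2.
Local Notation G := (gamma * (n%:R + 1)).

Let L_ge0 : 0 <= L. Proof. exact: ltW. Qed.
Let gamma_ge0 : 0 <= gamma. Proof. exact: ltW. Qed.
Let g_lip i : forall x y, enorm (g i x - g i y) <= L * enorm (x - y).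
Proof. exact: (smooth i).2. Qed.
Let G_gt0 : 0 < G. Proof. by rewrite mulr_gt0 // ltr_wpDl. Qed.

Let LG_le : L * G <= 1/20.
Proof.
have n1_gt0 : 0 < n%:R + 1 :> R by rewrite ltr_wpDl.
move: gamma_le; rewrite -[Y in _ <= Y]div1r ler_pdivlMr ?mulr_gt0 //.
by rewrite [_ * G]mulrC; lra.
Qed.

Let Lgamma_le : L * gamma <= 1/40.
Proof.
have : L * gamma * 2 <= L * G.
  have n_ge1 : 1 <= n%:R :> R by rewrite ler1n.
  by rewrite mulrA; apply: ler_wpM2l; [rewrite mulr_ge0 ?ltW | lra].
by move/le_trans/(_ LG_le); lra.
Qed.

Let Lgamma_le_half : 2 * (L * gamma) <= 1.
Proof. by have := Lgamma_le; lra. Qed.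

Lemma nfg_runS s : nfg_run g gamma pi x00 s.+1 = nfg_epoch g gamma (pi s) (X s, V s).
Proof. by rewrite /=; case: nfg_run. Qed.

Lemma nfg_run1 : X 1 = x00.
Proof.
have := epoch_x_bound n_gt0 L_ge0 gamma_ge0 Lgamma_le_half g_lip (pi 0) x00 0.
rewrite enorm0 !mulr0 scaler0 subr0 => X1_le.
apply/eqP; rewrite -subr_eq0; apply/eqP/enorm_eq0/le_anti.
by rewrite enorm_ge0 andbT; exact: X1_le.
Qed.

Lemma nfg_run_lyapunov s :
  favg f (X s.+2) + G * enorm (V s.+1) ^+ 2 / 25
    <= favg f (X s.+1) + G * enorm (V s) ^+ 2 / 25 - G / 2 * enorm (gavg g (X s.+1)) ^+ 2.
Proof.
apply: (favg_lyapunov_step n_gt0 L_ge0 smooth G_gt0 _ Lgamma_le LG_le (enorm_ge0 _)).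
- exact: mulr_ge0 L_ge0 gamma_ge0.
- rewrite (nfg_runS s.+1).
  exact: epoch_x_bound n_gt0 L_ge0 gamma_ge0 Lgamma_le_half g_lip _ _ _.
- rewrite (nfg_runS s).
  exact: epoch_v_bound n_gt0 L_ge0 gamma_ge0 Lgamma_le_half g_lip _ _ _.
Qed.

Lemma nfg_run_telescope S :
  favg f (X S.+1) + G * enorm (V S) ^+ 2 / 25
    + G / 2 * \sum_(1 <= s < S.+1) enorm (gavg g (X s)) ^+ 2 <= favg f x00.
Proof.
elim: S => [|S IH].
  by rewrite big_geq // nfg_run1 /= enorm0 expr0n /= !mulr0 mul0r !addr0.
by rewrite big_nat_recr //=; have := nfg_run_lyapunov S; lra.
Qed.
End Run.

Theorem theorem3 :
  exists C : nat,
  forall (R : realType) (d n : nat) (L gamma : R)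
         (f : 'I_n -> 'rV[R]_d -> R) (g : 'I_n -> 'rV[R]_d -> 'rV[R]_d)
         (pi : nat -> {perm 'I_n}) (x00 : 'rV[R]_d),
    (0 < n)%N -> 0 < L ->
    (forall i, L_smooth L (f i) (g i)) ->
    has_lbound (range (favg f)) ->
    0 < gamma -> gamma <= (20 * L * (n%:R + 1))^-1 ->
    forall (eps : R) (S : nat), 0 < eps -> (0 < S)%N ->
      C%:R * (favg f x00 - inf (range (favg f)))
        / (gamma * (n%:R + 1) * eps ^+ 2) <= S%:R ->
      (S%:R)^-1 * \sum_(1 <= s < S.+1)
          enorm (gavg g (nfg_run g gamma pi x00 s).1) ^+ 2 <= eps ^+ 2.
Proof.
exists 2%N => R d n L gamma f g pi x00 n_gt0 L_gt0 smooth f_lb gamma_gt0 gamma_le.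
move=> eps S eps_gt0 S_gt0.
set G := gamma * (n%:R + 1); set T := \sum_(1 <= s < S.+1) _.
have G_gt0 : 0 < G by rewrite mulr_gt0 // ltr_wpDl.
have Geps_gt0 : 0 < G * eps ^+ 2 by rewrite mulr_gt0 // exprn_gt0.
have telescope := nfg_run_telescope pi x00 n_gt0 L_gt0 smooth gamma_gt0 gamma_le S.
have inf_le : inf (range (favg f)) <= favg f (nfg_run g gamma pi x00 S.+1).1.
  by apply: (ge_inf f_lb); exists (nfg_run g gamma pi x00 S.+1).1.
have V_ge0 : 0 <= G * enorm (nfg_run g gamma pi x00 S).2 ^+ 2 / 25.
  by rewrite divr_ge0 // mulr_ge0 ?sqr_ge0 // ltW.
rewrite ler_pdivrMr // => budget.
have : G * T <= G * (S%:R * eps ^+ 2) by rewrite -/G -/T in telescope; lra.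
rewrite ler_pM2l // => T_le.
by rewrite mulrC ler_pdivrMr ?ltr0n // mulrC.
Qed.
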